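(* Let $q>1$. The maximum success probability of any strategy for the New Hats-on-a-line Game with $q$ hat colours and two players is $1-\left(\frac{q-1}{q}\right)^{2}=\frac{2q-1}{q^2}$.
   Context: The New Hats-on-a-line Game with $q$ colours and $n$ players: players $P_1,\dots,P_n$ stand in a line, and each player $P_i$ receives a hat whose colour $c_i$ is chosen uniformly at random from a fixed set of $q$ colours, independently of the other hats. Player $P_i$ sees exactly the hat colours $c_{i+1},\dots,c_n$. The players respond sequentially in the order $P_1,\dots,P_n$; each response is either a colour (a guess of one's own hat colour) or ''pass'', and each player hears all previous responses. No other communication is allowed, apart from agreeing on a strategy beforehand. A strategy specifies, for each player $P_i$, his response as a function of the colours he sees and the responses he has heard. The players win if at least one player guesses correctly and no player guesses incorrectly; the success probability of a strategy is the probability that the players win. Here $n=2$. *)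

From mathcomp Require Import all_boot all_order all_algebra.
Set Implicit Arguments. Unset Strict Implicit. Unset Printing Implicit Defensive.
Import Order.TTheory GRing.Theory Num.Theory.

(* A response: [None] = "pass", [Some c] = guess colour c. *)
Definition response (q : nat) := option 'I_q.

(* A (deterministic) strategy for two players:
   - P1 sees c2 (and hears nothing): responds [s1 c2];
   - P2 sees nothing, hears P1's response r1: responds [s2 r1]. *)
Record strategy2 (q : nat) := Strategy2 {
  s1 : 'I_q -> response q;
  s2 : response q -> response q }.

Definition correct q (r : response q) (c : 'I_q) : bool := r == Some c.
Definition incorrect q (r : response q) (c : 'I_q) : bool :=
  (r != None) && (r != Some c).

Definition wins q (S : strategy2 q) (c1 c2 : 'I_q) : bool :=
  let r1 := s1 S c2 in
  let r2 := s2 S r1 in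
  [&& correct r1 c1 || correct r2 c2, ~~ incorrect r1 c1 & ~~ incorrect r2 c2].

(* Hats are independent and uniform, so the success probability is the
   proportion of winning colourings among the q^2 equally likely ones. *)
Definition success_prob q (S : strategy2 q) : rat :=
  (#|[set c : 'I_q * 'I_q | wins S c.1 c.2]|%:R / (q ^ 2)%:R)%R.

(** If the first player passes, the second hears nothing new, so his fixed
    answer [b] to a pass must be right: every win with a pass has [c2 = b].
    If the first player guesses, he must be right, so for each [c2 <> b] at
    most one [c1] wins.  Hence at most [q + (q - 1) = 2q - 1] of the [q^2]
    colourings win.  Conversely, "the first player guesses colour 0 unless he
    sees 0, the second guesses 0 iff the first passed" wins exactly when one
    of the two hats has colour 0, i.e. with probability [1 - ((q-1)/q)^2]. *)

From mathcomp Require Import all_boot all_order all_algebra.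
From mathcomp Require Import zify ring.
Set Implicit Arguments. Unset Strict Implicit. Unset Printing Implicit Defensive.
Import Order.TTheory GRing.Theory Num.Theory.
Local Open Scope ring_scope.

Definition winning q (S : strategy2 q) : {set 'I_q * 'I_q} :=
  [set c | wins S c.1 c.2].

Lemma success_probE q (S : strategy2 q) :
  success_prob S = #|winning S|%:R / (q ^ 2)%:R.
Proof. by []. Qed.

Lemma wins_cases q (S : strategy2 q) c1 c2 : wins S c1 c2 ->
  (s1 S c2 = None /\ s2 S None = Some c2) \/ s1 S c2 = Some c1.
Proof.
rewrite /wins /correct /incorrect; case: (s1 S c2) => [a|] /=.
  by case/and3P => _; rewrite negbK => /eqP ->; right.
by case/andP => /eqP ->; left.
Qed.

Lemma card_winning_le q (S : strategy2 q) : (#|winning S| <= 2 * q - 1)%N.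
Proof.
case: q S => [|q] S.
  by apply: leq_trans (max_card _) _; rewrite card_prod card_ord.
set b := odflt ord0 (s2 S None).
set A := [set (c1, b) | c1 : 'I_q.+1].
set B := [set (odflt b (s1 S c2), c2) | c2 in [set~ b]].
have winning_sub : winning S \subset A :|: B.
  apply/subsetP => -[c1 c2]; rewrite inE => /wins_cases [[_ Hb]|Hc1].
    by rewrite inE; apply/orP; left; apply/imsetP; exists c1; rewrite // /b Hb.
  have [->|nb] := eqVneq c2 b.
    by rewrite inE; apply/orP; left; apply/imsetP; exists c1.
  by rewrite inE; apply/orP; right; apply/imsetP; exists c2; rewrite ?inE ?Hc1.
have cardA : (#|A| <= q.+1)%N.
  by apply: leq_trans (leq_imset_card _ _) _; rewrite card_ord.
have cardB : (#|B| <= q)%N.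
  by apply: leq_trans (leq_imset_card _ _) _; rewrite cardsC1 card_ord.
apply: leq_trans (subset_leq_card winning_sub) _.
apply: leq_trans (leq_card_setU _ _) _.
by apply: leq_trans (leq_add cardA cardB) _; lia.
Qed.

Definition guess_zero q : strategy2 q.+1 :=
  Strategy2 (fun c2 => if c2 == ord0 then None else Some ord0)
            (fun r => if r is None then Some ord0 else None).

Lemma wins_guess_zero q (c1 c2 : 'I_q.+1) :
  wins (guess_zero q) c1 c2 = (c2 == ord0) || (c1 == ord0).
Proof.
rewrite /wins /correct /incorrect.
case: (eqVneq c2 ord0) => [->|n2]; rewrite /guess_zero /= ?eqxx ?(negbTE n2) //.
by case: (eqVneq c1 ord0) => [->|n1];
  rewrite ?eqxx // (inj_eq (@Some_inj _)) eq_sym (negbTE n1).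
Qed.

Lemma card_winning_guess_zero q :
  #|winning (guess_zero q)| = (2 * q.+1 - 1)%N.
Proof.
have losing : ~: winning (guess_zero q) = setX [set~ ord0] [set~ ord0].
  by apply/setP => -[c1 c2]; rewrite !inE wins_guess_zero negb_or andbC.
have := cardsC (winning (guess_zero q)).
rewrite losing cardsX cardsC1 card_prod card_ord /=; nia.
Qed.

Lemma one_sub_sqr_ratio q : (0 < q)%N ->
  1 - ((q - 1)%:R / q%:R) ^+ 2 = (2 * q - 1)%:R / (q ^ 2)%:R :> rat.
Proof.
case: q => [|q] // _.
have -> : (q.+1 - 1 = q)%N by lia.
have -> : (2 * q.+1 - 1 = 2 * q + 1)%N by lia.
have q1_neq0 : (q%:R + 1 : rat) != 0 by rewrite natr1 pnatr_eq0.
by rewrite natrX -addn1 !natrD; field.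
Qed.

Theorem theorem3 (q : nat) (hq : (1 < q)%N) :
  (forall S : strategy2 q, success_prob S <= 1 - ((q - 1)%:R / q%:R) ^+ 2) /\
  (exists S : strategy2 q, success_prob S = 1 - ((q - 1)%:R / q%:R) ^+ 2) /\
  1 - ((q - 1)%:R / q%:R) ^+ 2 = (2 * q - 1)%:R / (q ^ 2)%:R :> rat.
Proof.
have q_gt0 : (0 < q)%N by apply: ltnW.
rewrite one_sub_sqr_ratio //; split; [|split=> //].
  move=> S; rewrite success_probE ler_pM2r ?invr_gt0 ?ltr0n ?expn_gt0 ?q_gt0 //.
  by rewrite ler_nat card_winning_le.
case: q hq q_gt0 => [|q] // _ _.
by exists (guess_zero q); rewrite success_probE card_winning_guess_zero.
Qed.
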